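(* For every integer $L\ge 5$, the class of Subgraph MPNNs cannot count $L$-cycles at node level, and for every integer $L\ge 4$, the class of Subgraph MPNNs cannot count $L$-paths at node level. That is, for each such $L$ there exist node-graph pairs $(i_1,G_1),(i_2,G_2)$ with $C(L\text{-cycle},i_1,G_1)\ne C(L\text{-cycle},i_2,G_2)$ (resp. $C(L\text{-path},i_1,G_1)\ne C(L\text{-path},i_2,G_2)$) such that every Subgraph MPNN gives $h_{i_1}(G_1)=h_{i_2}(G_2)$.
   Context: Graphs are finite, simple, undirected, $G=(V,E)$, possibly carrying node attributes $x_v$ and edge attributes $e_{u,v}$ (a fixed constant when absent). $N(v)$ is the neighbour set of $v$. For $L\ge 1$, an $L$-path is a sequence of edges $(v_1,v_2),\dots,(v_L,v_{L+1})$ of $G$ with $v_1,\dots,v_{L+1}$ pairwise distinct; for $L\ge 3$, an $L$-cycle is such a sequence with $v_1,\dots,v_L$ pairwise distinct and $v_{L+1}=v_1$. Two paths (resp. cycles) are identified when their edge sets coincide. $C(L\text{-cycle},i,G)$ is the number of inequivalent $L$-cycles containing node $i$; $C(L\text{-path},i,G)$ is the number of inequivalent $L$-paths starting from $i$. A class $\mathcal F$ of functions on node-graph pairs can count $S$ at node level if for all $(i_1,G_1),(i_2,G_2)$ with $C(S,i_1,G_1)\ne C(S,i_2,G_2)$ there is $f\in\mathcal F$ with $f(i_1,G_1)\ne f(i_2,G_2)$. Subgraph MPNNs. A Subgraph MPNN is specified by: (1) a subgraph extraction rule, either node deletion, $(V_i,E_i)=(V\setminus\{i\},E\setminus\{(i,j):j\in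 N(i)\})$, or the $K$-hop ego-network for some integer $K\ge1$, i.e. $(V_i,E_i)$ is the subgraph of $G$ induced by the nodes at shortest-path distance at most $K$ from $i$; (2) a node labeling $z_{i,j}$, which is either absent, identity labeling $z_{i,j}=\mathbb 1_{i=j}$, or shortest path distance $z_{i,j}=\mathrm{spd}(i,j)$; (3) a number of layers $T$ and arbitrary functions $M_t$ (with values in some $\mathbb R^{d_t}$) and $U_t$; (4) an arbitrary readout $R_{\text{node}}$ on finite multisets. For each root $i\in V$ and $j\in V_i$: $h^{(0)}_{i,j}=x_j\oplus z_{i,j}$, $h^{(t+1)}_{i,j}=U_t\big(h^{(t)}_{i,j},\sum_{k\in N_i(j)}M_t(h^{(t)}_{i,j},h^{(t)}_{i,k},e_{j,k})\big)$ with $N_i(j)=\{k\in V_i:(j,k)\in E_i\}$, and $h_i=R_{\text{node}}(\{\!\{h^{(T)}_{i,j}:j\in V_i\}\!\})$. The node-level function computed is $(i,G)\mapsto h_i$; the class of Subgraph MPNNs consists of all such choices. *)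

From HB Require Import structures.
From mathcomp Require Import all_boot all_order all_algebra.
From mathcomp Require Import reals.
Set Implicit Arguments. Unset Strict Implicit. Unset Printing Implicit Defensive.
Import Order.TTheory GRing.Theory Num.Theory.
Local Open Scope ring_scope.

Section Defs.
Variable R : realType.

(* A finite simple undirected graph with node attributes in R^dx and
   edge attributes in R^de (constant when absent). *)
Record graph (dx de : nat) := Graph {
  gV : finType;
  adj : rel gV;
  adj_sym : symmetric adj;
  adj_irr : irreflexive adj;
  xattr : gV -> 'rV[R]_dx;
  eattr : gV -> gV -> 'rV[R]_de;
  eattr_sym : forall u v, eattr u v = eattr v u }.
Arguments gV {dx de} g.
Arguments adj {dx de} g _ _.
Arguments xattr {dx de} g _.
Arguments eattr {dx de} g _ _.

Fixpoint within (V : finType) (a : rel V) (n : nat) (i j : V) : bool :=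
  if n is n'.+1 then within a n' i j || [exists k, within a n' i k && a k j]
  else i == j.

(* shortest path distance as a nat; equals #|V| when j is unreachable *)
Definition spd_nat (V : finType) (a : rel V) (i j : V) : nat :=
  find (fun n => within a n i j) (iota 0 #|V|).

(* real encoding of spd(i,j); infinity (unreachable) encoded as -1 *)
Definition spd_label (V : finType) (a : rel V) (i j : V) : R :=
  if (spd_nat a i j < #|V|)%N then (spd_nat a i j)%:R else -1.

Definition cycle_edges (V : finType) (s : seq V) : {set {set V}} :=
  [set:: [seq [set x; next s x] | x <- s]].

(* C(L-cycle, i, G): number of inequivalent L-cycles containing i *)
Definition count_cycles dx de (L : nat) (G : graph dx de) (i : gV G) : nat :=
  #|[set cycle_edges (tval s) | s : L.-tuple (gV G) &
       [&& uniq s, cycle (adj G) s & i \in tval s]]|.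

(* edge set of the path i = v_1, v_2, ..., v_{L+1} where p = v_2 .. v_{L+1} *)
Definition path_edges (V : finType) (i : V) (p : seq V) : {set {set V}} :=
  [set:: [seq [set xy.1; xy.2] | xy <- zip (i :: p) p]].

(* C(L-path, i, G): number of inequivalent L-paths starting from i *)
Definition count_paths dx de (L : nat) (G : graph dx de) (i : gV G) : nat :=
  #|[set path_edges i (tval p) | p : L.-tuple (gV G) &
       uniq (i :: tval p) && path (adj G) i p]|.

Inductive extraction := NodeDel | Ego of nat.
Definition extraction_ok (r : extraction) : bool :=
  if r is Ego K then (0 < K)%N else true.

(* node set V_i of the subgraph of root i; edges E_i are those of G between
   nodes of V_i (for node deletion this is E minus the edges at i; for
   ego-networks it is the induced subgraph) *)
Definition subV (r : extraction) (V : finType) (a : rel V) (i : V) : {set V} :=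
  match r with
  | NodeDel => [set j | j != i]
  | Ego K => [set j | within a K i j]
  end.

Inductive labeling := NoLabel | IdLabel | SpdLabel.
Definition labdim (l : labeling) : nat := if l is NoLabel then 0 else 1.

Definition zlab (l : labeling) (V : finType) (a : rel V) (i j : V)
  : 'rV[R]_(labdim l) :=
  match l return 'rV[R]_(labdim l) with
  | NoLabel => 0
  | IdLabel => const_mx (if i == j then 1 else 0)
  | SpdLabel => const_mx (spd_label a i j)
  end.

(* a Subgraph MPNN (minus its readout) for graphs with attribute dims dx, de.
   State dimension at layer 0 is dx + labdim; at layer t+1 it is kdim t;
   messages at layer t live in R^(mdim t). *)
Record smpnn (dx de : nat) := SMPNN {
  rule : extraction;
  lab : labeling;
  nlayers : nat;
  kdim : nat -> nat;
  mdim : nat -> nat;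
  Mf : forall t : nat,
    'rV[R]_(if t is t'.+1 then kdim t' else (dx + labdim lab)%N) ->
    'rV[R]_(if t is t'.+1 then kdim t' else (dx + labdim lab)%N) ->
    'rV[R]_de -> 'rV[R]_(mdim t);
  Uf : forall t : nat,
    'rV[R]_(if t is t'.+1 then kdim t' else (dx + labdim lab)%N) ->
    'rV[R]_(mdim t) -> 'rV[R]_(kdim t) }.
Arguments rule {dx de} s.
Arguments lab {dx de} s.
Arguments nlayers {dx de} s.
Arguments kdim {dx de} s _.
Arguments mdim {dx de} s _.
Arguments Mf {dx de} s t _ _ _.
Arguments Uf {dx de} s t _ _.

Definition sdim dx de (N : smpnn dx de) (t : nat) : nat :=
  if t is t'.+1 then kdim N t' else (dx + labdim (lab N))%N.

Local Unset Implicit Arguments.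
Fixpoint hstate dx de (N : smpnn dx de) (G : graph dx de) (i : gV G) (t : nat)
  : gV G -> 'rV[R]_(sdim N t) :=
  match t return gV G -> 'rV[R]_(sdim N t) with
  | 0 => fun j => row_mx (xattr G j) (zlab (lab N) (adj G) i j)
  | t'.+1 => fun j =>
      Uf N t' (hstate dx de N G i t' j)
        (\sum_(k in subV (rule N) (adj G) i | adj G j k)
            Mf N t' (hstate dx de N G i t' j) (hstate dx de N G i t' k) (eattr G j k))
  end.
Local Set Implicit Arguments.
Arguments hstate {dx de} N G i t _.

(* a readout on finite multisets = a function on sequences invariant
   under permutation *)
Definition multiset_fun (A : eqType) (Out : Type) (f : seq A -> Out) : Prop :=
  forall s1 s2 : seq A, perm_eq s1 s2 -> f s1 = f s2.

Definition node_out dx de (N : smpnn dx de) (Out : Type)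
  (Rd : seq 'rV[R]_(sdim N (nlayers N)) -> Out) (G : graph dx de) (i : gV G)
  : Out :=
  Rd [seq hstate N G i (nlayers N) j | j <- enum (subV (rule N) (adj G) i)].
Arguments node_out {dx de} N {Out} Rd G i.

Definition smpnn_indist dx de (G1 G2 : graph dx de) (i1 : gV G1) (i2 : gV G2)
  : Prop :=
  forall (N : smpnn dx de), extraction_ok (rule N) ->
  forall (Out : Type) (Rd : seq 'rV[R]_(sdim N (nlayers N)) -> Out),
    multiset_fun Rd -> node_out N Rd G1 i1 = node_out N Rd G2 i2.

End Defs.

Arguments count_cycles {R dx de} L G i.
Arguments count_paths {R dx de} L G i.
Arguments smpnn_indist {R dx de} G1 G2 i1 i2.

(* Root both graphs at the apex of a cone (a new vertex joined to all others)
   over a 2-regular graph on 2m vertices: the cycle C_2m, resp. two disjoint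
   copies of C_m.  Every admissible extraction keeps all base vertices, every
   labeling only tells the apex from the rest, and in the extracted subgraph
   the apex sees all 2m base vertices while each base vertex sees exactly two
   base vertices (and the apex, unless it was deleted).  By induction on the
   layers, a state therefore only depends on whether the node is the apex, so
   every Subgraph MPNN outputs the same at both roots.  On the other hand an
   (m+2)-cycle through the apex, or an (m+1)-path from it, amounts to a path
   through m+1 distinct base vertices: C_2m has one, whereas each component of
   the two copies of C_m has only m vertices. *)

From mathcomp Require Import all_boot all_algebra.
From mathcomp Require Import reals.
Set Implicit Arguments. Unset Strict Implicit. Unset Printing Implicit Defensive.

Lemma big_option (R : Type) (idx : R) (op : Monoid.com_law idx) (W : finType)
    (P : pred (option W)) (F : option W -> R) :
  \big[op/idx]_(k | P k) F k =
    op (if P None then F None else idx) (\big[op/idx]_(w | P (Some w)) F (Some w)).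
Proof.
have enum_opt : perm_eq (index_enum {: option W}) (None :: map Some (index_enum W)).
  apply: uniq_perm; rewrite ?index_enum_uniq //=.
  - rewrite map_inj_uniq ?index_enum_uniq ?andbT; last by move=> ? ? [].
    by apply/mapP => -[].
  - by case=> [w|]; rewrite mem_index_enum ?inE //= map_f ?orbT ?mem_index_enum.
rewrite (perm_big _ enum_opt) big_cons big_map.
by case: (P None); rewrite ?Monoid.mul1m.
Qed.

Lemma eq_map_uniform (A1 A2 B : Type) (f1 : A1 -> B) (f2 : A2 -> B) s1 s2 :
  size s1 = size s2 -> (forall x1 x2, f1 x1 = f2 x2) -> map f1 s1 = map f2 s2.
Proof.
move=> + f12; elim: s1 s2 => [|x1 s1 IH] [|x2 s2] //= [/IH ->].
by rewrite (f12 x1 x2).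
Qed.

Lemma eq_sumr_uniform (V : nmodType) (T1 T2 : finType) (P1 : pred T1) (P2 : pred T2)
    (f1 : T1 -> V) (f2 : T2 -> V) :
  #|P1| = #|P2| -> (forall x1 x2, f1 x1 = f2 x2) ->
  (\sum_(x | P1 x) f1 x = \sum_(x | P2 x) f2 x)%R.
Proof.
move=> card12 f12.
have sum_enum (T : finType) (P : pred T) (f : T -> V) :
    (\sum_(x | P x) f x = \sum_(v <- map f (enum P)) v)%R.
  by rewrite big_map /enum_mem big_filter /index_enum unlock.
by rewrite !sum_enum (eq_map_uniform (f2 := f2) (s2 := enum P2)) // -!cardE.
Qed.

Lemma map_Some_pmap (W : eqType) (p : seq (option W)) :
  None \notin p -> map Some (pmap id p) = p.
Proof. by elim: p => //= -[w|] p IH; rewrite inE //= => /IH ->. Qed.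

Lemma path_invariant (T : Type) (U : eqType) (e : rel T) (f : T -> U) :
  (forall a b, e a b -> f a = f b) ->
  forall x p, path e x p -> all (fun y => f y == f x) p.
Proof.
move=> f_e x p; elim: p x => //= y p IH x /andP[e_xy /IH].
by rewrite (f_e _ _ e_xy) eqxx.
Qed.

Lemma iter_ordS n k (i : 'I_n) : val (iter k (@ordS n) i) = (i + k) %% n.
Proof.
elim: k => [|k IH] /=; first by rewrite addn0 modn_small.
by rewrite IH -addn1 modnDml addn1 addnS.
Qed.

Lemma iter_ordS_neq n k (i : 'I_n) : 0 < k < n -> iter k (@ordS n) i != i.
Proof.
case/andP=> k_gt0 k_lt_n; rewrite -val_eqE iter_ordS.
rewrite -[X in _ == X](modn_small (ltn_ord i)) -[X in _ == X %% n]addn0 eqn_modDl.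
by rewrite mod0n modn_small // -lt0n.
Qed.

Lemma ordS_neq n (i : 'I_n) : 1 < n -> ordS i != i.
Proof. exact: (iter_ordS_neq (k := 1)). Qed.

Lemma ordS2_neq n (i : 'I_n) : 2 < n -> ordS (ordS i) != i.
Proof. exact: (iter_ordS_neq (k := 2)). Qed.

Lemma uniq_traject_ordS n k (i : 'I_n) : k <= n -> uniq (traject (@ordS n) i k).
Proof.
case: k => // k k_lt_n; rewrite looping_uniq; apply/trajectP => -[j j_lt_k].
rewrite -(subnK (ltnW j_lt_k)) iterD; apply/eqP/iter_ordS_neq.
by rewrite subn_gt0 j_lt_k /= (leq_ltn_trans (leq_subr _ _)).
Qed.

Section Distance.
Variables (V : finType) (a : rel V).

Lemma within_refl n i : within a n i i.
Proof. by elim: n => [|n IH] /=; rewrite ?eqxx ?IH. Qed.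

Lemma within_step n i j : a i j -> within a n.+1 i j.
Proof. by move=> aij /=; apply/orP; right; apply/existsP; exists i; rewrite within_refl. Qed.

Lemma spd_label_refl (R : realType) i : spd_label R a i i = 0%R.
Proof.
have : 0 < #|V| by apply/card_gt0P; exists i.
by rewrite /spd_label /spd_nat; case: #|V| => // n _ /=; rewrite eqxx.
Qed.

Lemma spd_label_adj (R : realType) i j : i != j -> a i j -> spd_label R a i j = 1%R.
Proof.
move=> ij aij; have : 1 < #|V| by apply/card_gt1P; exists i, j.
rewrite /spd_label /spd_nat; case: #|V| => [|[|n]] // _ /=.
by rewrite (negbTE ij) /=; case: existsP => // -[]; exists i; rewrite eqxx.
Qed.

End Distance.

Definition succ_rel (W : eqType) (s : W -> W) : rel W :=
  fun a b => (b == s a) || (a == s b).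

Section SuccRel.
Variables (W : finType) (s : W -> W).

Lemma succ_rel_sym : symmetric (succ_rel s).
Proof. by move=> a b; rewrite /succ_rel orbC. Qed.

Lemma succ_rel_irr : (forall w, s w != w) -> irreflexive (succ_rel s).
Proof. by move=> s_neq a; rewrite /succ_rel orbb eq_sym (negbTE (s_neq a)). Qed.

Lemma succ_rel_frel : subrel (frel s) (succ_rel s).
Proof. by move=> a b /eqP <-; rewrite /succ_rel eqxx. Qed.

Lemma card_succ_rel a : injective s -> (forall w, s (s w) != w) -> #|succ_rel s a| = 2.
Proof.
move=> s_inj s2_neq; set b := invF s_inj a.
have sb : s b = a by rewrite /b f_invF.
rewrite (@eq_card _ _ (pred2 (s a) b)); last first.
  by move=> w; rewrite unfold_in !inE /= -[X in X == s w]sb (inj_eq s_inj) (eq_sym b).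
have sa_b : s a != b by apply: contra_neq (s2_neq a) => ->.
by rewrite card2 sa_b.
Qed.

End SuccRel.

Section Cone.
Variables (W : finType) (e : rel W).

Definition cone_adj : rel (option W) := fun x y =>
  match x, y with
  | Some a, Some b => e a b
  | None, None => false
  | _, _ => true
  end.

Lemma cone_adj_sym : symmetric e -> symmetric cone_adj.
Proof. by move=> e_sym [a|] [b|] //=. Qed.

Lemma cone_adj_irr : irreflexive e -> irreflexive cone_adj.
Proof. by move=> e_irr [a|] //=. Qed.

Lemma path_cone_adj x q : path cone_adj (Some x) (map Some q) = path e x q.
Proof. by rewrite path_map. Qed.

Lemma subV_cone r : extraction_ok r ->
  subV r cone_adj None = if r is Ego _ then setT else [set j | j != None].
Proof.
case: r => [|[|K]] // _; apply/setP => j; rewrite in_setT in_set.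
by case: j => [w|]; [apply: within_step | apply: within_refl].
Qed.

Lemma base_in_subV_cone r w : extraction_ok r -> Some w \in subV r cone_adj None.
Proof. by move=> r_ok; rewrite subV_cone //; case: r {r_ok}; rewrite !inE. Qed.

Lemma perm_enum_subV_cone r : extraction_ok r ->
  perm_eq (enum (subV r cone_adj None))
          (if r is Ego _ then None :: map Some (enum W) else map Some (enum W)).
Proof.
move=> r_ok; have uniq_base : uniq (map Some (enum W)).
  by rewrite map_inj_uniq ?enum_uniq // => ? ? [].
have base_mem w : Some w \in map Some (enum W) by rewrite map_f ?mem_enum.
have apex_base : None \notin map Some (enum W) by apply/mapP => -[].
apply: uniq_perm; first exact: enum_uniq.
  by case: r {r_ok}; rewrite //= apex_base.
move=> j; rewrite mem_enum subV_cone //.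
by case: r {r_ok} => [|K]; case: j => [w|]; rewrite !inE ?base_mem ?orbT // (negbTE apex_base).
Qed.

Lemma spd_label_cone (R : realType) j :
  spd_label R cone_adj None j = if j is Some _ then 1%R else 0%R.
Proof. by case: j => [w|]; rewrite ?spd_label_refl ?spd_label_adj. Qed.

Lemma card_cone_nbhd r j : extraction_ok r ->
  #|[pred w | (Some w \in subV r cone_adj None) && cone_adj j (Some w)]| =
  if j is Some a then #|e a| else #|W|.
Proof.
move=> r_ok; rewrite (eq_card (B := [pred w | cone_adj j (Some w)])).
  by case: j => [a|]; apply: eq_card.
by move=> w; rewrite !inE base_in_subV_cone.
Qed.

End Cone.

Definition cone (R : realType) (W : finType) (e : rel W)
    (e_sym : symmetric e) (e_irr : irreflexive e) : graph R 0 0 :=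
  @Graph R 0 0 (option W) (cone_adj e) (cone_adj_sym e_sym) (cone_adj_irr e_irr)
    (fun _ => 0%R) (fun _ _ => 0%R) (fun _ _ => erefl).

Section RegularCones.
Variable R : realType.
Variables (W1 W2 : finType) (e1 : rel W1) (e2 : rel W2) (d : nat).
Hypotheses (e1_sym : symmetric e1) (e1_irr : irreflexive e1).
Hypotheses (e2_sym : symmetric e2) (e2_irr : irreflexive e2).
Hypotheses (e1_reg : forall a, #|e1 a| = d) (e2_reg : forall a, #|e2 a| = d).
Hypothesis card_W12 : #|W1| = #|W2|.

Let G1 := cone R e1_sym e1_irr.
Let G2 := cone R e2_sym e2_irr.

Lemma zlab_cone l j1 j2 : (j1 == None) = (j2 == None) ->
  zlab R l (cone_adj e1) None j1 = zlab R l (cone_adj e2) None j2.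
Proof.
by case: l => //=; case: j1 => [a|]; case: j2 => [b|] //= _; rewrite !spd_label_cone.
Qed.

Lemma sum_cone_nbhd (V : nmodType) r (f1 : option W1 -> V) (f2 : option W2 -> V) j1 j2 :
  extraction_ok r -> (j1 == None) = (j2 == None) ->
  f1 None = f2 None -> (forall w1 w2, f1 (Some w1) = f2 (Some w2)) ->
  (\sum_(k in subV r (cone_adj e1) None | cone_adj e1 j1 k) f1 k =
   \sum_(k in subV r (cone_adj e2) None | cone_adj e2 j2 k) f2 k)%R.
Proof.
move=> r_ok j12 f12_apex f12_base; rewrite !big_option; congr (_ + _)%R.
  rewrite !subV_cone //.
  by case: r {r_ok}; case: j1 j12 => [a|]; case: j2 => [b|]; rewrite //= !inE.
apply: eq_sumr_uniform => //.
rewrite !card_cone_nbhd //.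
by case: j1 j12 => [a|]; case: j2 => [b|] //= _; rewrite e1_reg e2_reg.
Qed.

Lemma hstate_cone (N : smpnn R 0 0) t j1 j2 : extraction_ok (rule N) ->
  (j1 == None) = (j2 == None) -> hstate R 0 0 N G1 None t j1 = hstate R 0 0 N G2 None t j2.
Proof.
move=> N_ok; elim: t j1 j2 => [|t IH] j1 j2 j12 /=; first by rewrite (zlab_cone _ j12).
rewrite (IH _ _ j12); apply: congr1.
by apply: sum_cone_nbhd => // [|w1 w2]; [rewrite (IH _ None) | rewrite (IH _ (Some w2))].
Qed.

Lemma regular_cones_indist : smpnn_indist G1 G2 None None.
Proof.
move=> N N_ok Out Rd Rd_perm; rewrite /node_out.
rewrite (Rd_perm _ _ (perm_map _ (perm_enum_subV_cone _ N_ok))).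
rewrite (Rd_perm _ _ (perm_map _ (perm_enum_subV_cone _ N_ok))).
have h_base : [seq hstate R 0 0 N G1 None (nlayers N) j | j <- map Some (enum W1)] =
              [seq hstate R 0 0 N G2 None (nlayers N) j | j <- map Some (enum W2)].
  have size_W12 : size (enum W1) = size (enum W2) by rewrite -!cardE.
  rewrite -[LHS]map_comp -[RHS]map_comp.
  by apply: (eq_map_uniform size_W12) => w1 w2; apply: hstate_cone.
case: (rule N) => [|K] /=; rewrite h_base //.
by congr (Rd (_ :: _)); apply: hstate_cone.
Qed.

End RegularCones.

Section CycleCone.
Variables (R : realType) (n : nat).
Hypothesis n_gt2 : 2 < n.

Definition cycle_cone : graph R 0 0 :=
  cone R (succ_rel_sym (@ordS n)) (succ_rel_irr (fun i => ordS_neq i (ltnW n_gt2))).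

Let x0 : 'I_n := Ordinal (ltnW (ltnW n_gt2)).
Let apex_path k := map Some (traject (@ordS n) x0 k.+1).

Lemma uniq_apex_path k : k < n -> uniq (None :: apex_path k).
Proof.
move=> k_lt_n; have Some_inj : injective (@Some 'I_n) by move=> ? ? [].
by rewrite cons_uniq map_inj_uniq // uniq_traject_ordS // andbT; apply/mapP => -[].
Qed.

Lemma path_apex_path k : path (cone_adj (succ_rel (@ordS n))) None (apex_path k).
Proof.
rewrite /apex_path trajectS /= path_cone_adj.
exact: sub_path (@succ_rel_frel _ _) _ _ (fpath_traject _ _ _).
Qed.

Lemma count_cycles_cycle_cone_gt0 k : k < n -> 0 < count_cycles k.+2 cycle_cone None.
Proof.
move=> k_lt_n; have size_p : size (None :: apex_path k) == k.+2.
  by rewrite /= size_map size_traject.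
apply/card_gt0P; exists (cycle_edges (None :: apex_path k)); apply/imsetP.
exists (Tuple size_p) => //; rewrite inE [tval _]/= uniq_apex_path // mem_head andbT.
have -> : cycle (adj (g := cycle_cone)) (None :: apex_path k) =
          path (cone_adj (succ_rel (@ordS n))) None (rcons (apex_path k) None) by [].
by rewrite rcons_path path_apex_path /apex_path trajectS /= last_map.
Qed.

Lemma count_paths_cycle_cone_gt0 k : k < n -> 0 < count_paths k.+1 cycle_cone None.
Proof.
move=> k_lt_n; have size_p : size (apex_path k) == k.+1.
  by rewrite size_map size_traject.
apply/card_gt0P; exists (path_edges None (apex_path k)); apply/imsetP.
by exists (Tuple size_p) => //; rewrite inE [tval _]/= uniq_apex_path // path_apex_path.
Qed.

End CycleCone.

Definition two_cycles_succ m (p : bool * 'I_m) : bool * 'I_m := (p.1, ordS p.2).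

Section TwoCyclesCone.
Variables (R : realType) (m : nat).
Hypothesis m_gt2 : 2 < m.

Lemma two_cycles_succ_neq (p : bool * 'I_m) : two_cycles_succ p != p.
Proof. by case: p => b i; rewrite xpair_eqE /= (negbTE (ordS_neq _ (ltnW m_gt2))) andbF. Qed.

Lemma two_cycles_succ_inj : injective (@two_cycles_succ m).
Proof. by apply: (can_inj (g := fun p => (p.1, ord_pred p.2))) => -[b i]; rewrite /= ordSK. Qed.

Lemma two_cycles_succ2_neq (p : bool * 'I_m) : two_cycles_succ (two_cycles_succ p) != p.
Proof. by case: p => b i; rewrite xpair_eqE /= (negbTE (ordS2_neq _ m_gt2)) andbF. Qed.

Definition two_cycles_cone : graph R 0 0 :=
  cone R (succ_rel_sym (@two_cycles_succ m)) (succ_rel_irr two_cycles_succ_neq).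

Lemma size_path_two_cycles x q :
  uniq (x :: q) -> path (succ_rel (@two_cycles_succ m)) x q -> size q < m.
Proof.
move=> uniq_xq path_xq.
have fst_q : all (fun y => y.1 == x.1) q.
  by apply: path_invariant path_xq => a b /orP[] /eqP ->.
have fiber y : y.1 = x.1 -> y \in [seq (x.1, i) | i <- enum 'I_m].
  by case: y => b i /= ->; rewrite map_f ?mem_enum.
have := uniq_leq_size uniq_xq (s2 := [seq (x.1, i) | i <- enum 'I_m]).
rewrite size_map size_enum_ord; apply=> y /predU1P[-> | /(allP fst_q)/eqP]; exact: fiber.
Qed.

Lemma size_apex_path_two_cycles_cone p : uniq (None :: p) ->
  path (cone_adj (succ_rel (@two_cycles_succ m))) None p -> size p <= m.
Proof.
rewrite cons_uniq => /andP[apex_p]; rewrite -(map_Some_pmap apex_p) map_inj_uniq; last first.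
  by move=> ? ? [].
case: (pmap id p) => [|x q] // uniq_xq; rewrite size_map /= path_cone_adj.
exact: size_path_two_cycles.
Qed.

Lemma count_paths_two_cycles_cone : count_paths m.+1 two_cycles_cone None = 0.
Proof.
apply: eq_card0 => E; rewrite !inE; apply/negbTE/imsetP => -[t].
rewrite inE => /andP[uniq_t path_t] _.
by have := size_apex_path_two_cycles_cone uniq_t path_t; rewrite size_tuple ltnn.
Qed.

Lemma count_cycles_two_cycles_cone : count_cycles m.+2 two_cycles_cone None = 0.
Proof.
apply: eq_card0 => E; rewrite !inE; apply/negbTE/imsetP => -[t].
rewrite inE => /and3P[uniq_t cycle_t apex_t] _.
have := rot_index apex_t; set p := (drop _ _ ++ _) => rot_t.
have uniq_p : uniq (None :: p) by rewrite -rot_t rot_uniq.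
have path_p : path (cone_adj (succ_rel (@two_cycles_succ m))) None p.
  by move: cycle_t; rewrite -(rot_cycle (index None t)) rot_t /cycle rcons_path => /andP[].
have [size_p] : size (None :: p) = m.+2 by rewrite -rot_t size_rot size_tuple.
by have := size_apex_path_two_cycles_cone uniq_p path_p; rewrite size_p ltnn.
Qed.

End TwoCyclesCone.

Lemma cycle_cone_indist_two_cycles_cone (R : realType) m (m_gt2 : 2 < m) :
  smpnn_indist (cycle_cone R (ltn_addr m m_gt2)) (two_cycles_cone R m_gt2) None None.
Proof.
apply: (@regular_cones_indist _ _ _ _ _ 2) => [a|a|].
- by apply: card_succ_rel => [|i]; [exact: ordS_inj | exact/ordS2_neq/ltn_addr].
- by apply: card_succ_rel => [|p]; [exact: two_cycles_succ_inj | exact: two_cycles_succ2_neq].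
- by rewrite card_prod card_bool !card_ord mul2n addnn.
Qed.

Theorem theorem2 (R : realType) :
  (forall L : nat, (5 <= L)%N ->
     exists (dx de : nat) (G1 G2 : graph R dx de) (i1 : gV G1) (i2 : gV G2),
       count_cycles L G1 i1 <> count_cycles L G2 i2 /\ smpnn_indist G1 G2 i1 i2)
  /\
  (forall L : nat, (4 <= L)%N ->
     exists (dx de : nat) (G1 G2 : graph R dx de) (i1 : gV G1) (i2 : gV G2),
       count_paths L G1 i1 <> count_paths L G2 i2 /\ smpnn_indist G1 G2 i1 i2).
Proof.
split=> [[|[|m]] // | [|m] //]; rewrite !ltnS => m_gt2;
  have m_lt_2m : m < m + m by rewrite -[X in X < _]addn0 ltn_add2l (ltnW (ltnW m_gt2)).
  exists 0, 0, (cycle_cone R (ltn_addr m m_gt2)), (two_cycles_cone R m_gt2), None, None.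
  split; last exact: cycle_cone_indist_two_cycles_cone.
  by rewrite count_cycles_two_cycles_cone; apply/eqP; rewrite -lt0n count_cycles_cycle_cone_gt0.
exists 0, 0, (cycle_cone R (ltn_addr m m_gt2)), (two_cycles_cone R m_gt2), None, None.
split; last exact: cycle_cone_indist_two_cycles_cone.
by rewrite count_paths_two_cycles_cone; apply/eqP; rewrite -lt0n count_paths_cycle_cone_gt0.
Qed.
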